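(* For a finite graph $G$, let $M(G)$ be the maximum number of distinct subsets of $V(G)$ such that any two distinct subsets in the family are neighbors. Let $K_{m,n}$ be the complete bipartite graph with parts of sizes $m$ and $n$. Then $$M(K_{m,n})=(2^m-1)(2^n-1)+2.$$ More generally, if $K_{n_1,\dots,n_r}$ is the complete multipartite graph with disjoint parts (maximal stable sets) of cardinalities $n_1,\dots,n_r$, then $$M(K_{n_1,\dots,n_r})=2^{\sum_{i=1}^r n_i}-\sum_{i=1}^r 2^{n_i}+2r-1.$$
   Context: Two subsets $A,B$ of the vertex set of a graph $G$ are called neighbors if there exist $a\in A$ and $b\in B$ such that $a$ and $b$ are adjacent in $G$. (A subset may or may not be its own neighbor.) *)

From mathcomp Require Import all_boot all_order all_algebra.
Set Implicit Arguments. Unset Strict Implicit. Unset Printing Implicit Defensive.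

Section Defs.
Variable T : finType.

Definition neighbors (e : rel T) (A B : {set T}) : bool :=
  [exists a in A, exists b in B, e a b].

Definition mutually_neighboring (e : rel T) (F : {set {set T}}) : bool :=
  [forall A in F, forall B in F, (A != B) ==> neighbors e A B].

Definition M (e : rel T) : nat :=
  \max_(F : {set {set T}} | mutually_neighboring e F) #|F|.

(* complete multipartite graph whose parts are the fibres of p *)
Definition cmp_rel (I : eqType) (p : T -> I) : rel T := fun x y => p x != p y.
End Defs.

From mathcomp Require Import all_boot all_order all_algebra zify.
Set Implicit Arguments.
Unset Strict Implicit.
Unset Printing Implicit Defensive.

(* In a complete multipartite graph a set meeting two parts is a neighbor of
   every nonempty set, while two nonempty sets inside one part are never
   neighbors.  Hence a mutually neighboring family not containing the empty set
   consists of sets meeting two parts plus at most one set inside each part,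
   and the sets meeting two parts together with the parts themselves attain
   this bound.  Counting subsets part by part then gives the closed formula. *)

Section MutuallyNeighboring.
Variables (T : finType) (e : rel T).

Lemma neighbors_set0l (B : {set T}) : ~~ neighbors e set0 B.
Proof. by apply/existsP => -[a]; rewrite inE. Qed.

Lemma mutually_neighboringP (F : {set {set T}}) :
  reflect {in F &, forall A B, A != B -> neighbors e A B}
          (mutually_neighboring e F).
Proof.
apply: (iffP forall_inP) => [mn A B AF BF AB | mn A AF].
  by move/forall_inP/(_ B BF)/implyP: (mn A AF); apply.
by apply/forall_inP => B BF; apply/implyP; apply: mn.
Qed.

Lemma mutually_neighboring_set0 (F : {set {set T}}) :
  mutually_neighboring e F -> set0 \in F -> F \subset [set set0].
Proof.
move=> /mutually_neighboringP mn F0; apply/subsetP => B BF; rewrite inE.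
by apply: contraR (neighbors_set0l B) => B0; apply: mn; rewrite // eq_sym.
Qed.

End MutuallyNeighboring.

Section CompleteMultipartite.
Variables (T I : finType) (p : T -> I) (i0 : I).

Local Notation G := (cmp_rel p).

Definition fibre i := [set x | p x == i].

Definition multipart := [set A : {set T} | [exists x in A, exists y in A, p x != p y]].

(* The part containing a set inside one part; [i0] is a junk value for [set0]. *)
Definition part_of (A : {set T}) := if [pick x in A] is Some x then p x else i0.

Lemma neighbors_cmpE (A B : {set T}) :
  neighbors G A B = [exists a in A, exists b in B, p a != p b].
Proof. by []. Qed.

Lemma neighbors_cmpC (A B : {set T}) : neighbors G A B = neighbors G B A.
Proof.
rewrite !neighbors_cmpE.
by apply/existsP/existsP => -[a /andP[aA /existsP[b /andP[bB ab]]]];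
  exists b; rewrite bB /=; apply/existsP; exists a; rewrite aA eq_sym.
Qed.

Lemma multipartPn (A : {set T}) :
  reflect {in A &, forall x y, p x = p y} (A \notin multipart).
Proof.
rewrite inE; apply: (iffP idP) => [nA x y xA yA | mono].
  apply/eqP; apply: contraNT nA => pxy.
  by apply/existsP; exists x; rewrite xA; apply/existsP; exists y; rewrite yA.
by apply/existsP => -[x /andP[xA /existsP[y /andP[yA /eqP[]]]]]; apply: mono.
Qed.

Lemma part_of_notin_multipart (A : {set T}) x :
  A \notin multipart -> x \in A -> part_of A = p x.
Proof.
move=> /multipartPn mono xA; rewrite /part_of.
by case: pickP => [y yA | /(_ x)]; [apply: mono | rewrite xA].
Qed.

Lemma multipart_neq0 (A : {set T}) : A \in multipart -> A != set0.
Proof. by rewrite inE => /existsP[x /andP[xA _]]; apply/set0Pn; exists x. Qed.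

Lemma multipart_neighbors (A B : {set T}) :
  A \in multipart -> B != set0 -> neighbors G A B.
Proof.
rewrite inE neighbors_cmpE.
move=> /existsP[x /andP[xA /existsP[y /andP[yA pxy]]]] /set0Pn[b bB].
(* [b] lies outside the part of [x] or outside the part of [y]. *)
have [pxb | pxb] := eqVneq (p x) (p b).
  apply/existsP; exists y; rewrite yA; apply/existsP; exists b; rewrite bB.
  by rewrite -pxb eq_sym.
by apply/existsP; exists x; rewrite xA; apply/existsP; exists b; rewrite bB.
Qed.

Lemma fibre_notin_multipart i : fibre i \notin multipart.
Proof. by apply/multipartPn => x y; rewrite !inE => /eqP-> /eqP->. Qed.

Lemma set0_notin_multipart : set0 \notin multipart.
Proof. by apply/multipartPn => x; rewrite inE. Qed.

Lemma card_mutually_neighboring_cmp (F : {set {set T}}) :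
  mutually_neighboring G F -> #|F| <= #|multipart| + #|I|.
Proof.
move=> mn; have I_gt0 : 0 < #|I| by apply/card_gt0P; exists i0.
have [F0 | F0] := boolP (set0 \in F).
  apply: (leq_trans (subset_leq_card (mutually_neighboring_set0 mn F0))).
  by rewrite cards1 (leq_trans I_gt0 (leq_addl _ _)).
rewrite -(cardsID multipart F) leq_add ?subset_leq_card ?subsetIr //.
rewrite -(card_in_imset (f := part_of)) ?max_card //.
move=> A B /setDP[AF AM] /setDP[BF BM] pAB; apply: contraTeq isT => AB.
have := mutually_neighboringP _ _ mn A B AF BF AB.
rewrite neighbors_cmpE => /existsP[a /andP[aA /existsP[b /andP[bB]]]].
by rewrite -(part_of_notin_multipart AM aA) -(part_of_notin_multipart BM bB) pAB eqxx.
Qed.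

Lemma card_multipart :
  #|multipart| + \sum_i 2 ^ #|fibre i| + 1 = 2 ^ #|T| + #|I|.
Proof.
have nonempty_mono A i : (A \in ~: multipart :\ set0) && (part_of A == i)
                         = (A \in powerset (fibre i) :\ set0).
  rewrite !in_setD1 in_setC powersetE -andbA.
  have [// | A_neq0 /=] := eqVneq A set0; have /set0Pn[x xA] := A_neq0.
  apply/andP/subsetP => [[AM /eqP <-] y yA | Ai].
    by rewrite inE (part_of_notin_multipart AM yA).
  have AM : A \notin multipart.
    by apply/multipartPn => y z /Ai; rewrite inE => /eqP-> /Ai; rewrite inE => /eqP->.
  by split=> //; rewrite (part_of_notin_multipart AM xA); have := Ai x xA; rewrite inE.
have card_nonempty_mono : #|~: multipart :\ set0|
                          = \sum_i #|powerset (fibre i) :\ set0|.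
  rewrite -sum1_card (partition_big part_of predT) //=; apply: eq_bigr => i _.
  by rewrite -sum1_card; apply: eq_bigl => A; apply: nonempty_mono.
have card_fibre_subsets i : 2 ^ #|fibre i| = #|powerset (fibre i) :\ set0| + 1.
  by rewrite -card_powerset (cardsD1 set0) inE sub0set addnC.
have card_setT : 2 ^ #|T| = #|{set T}|.
  by rewrite -cardsT -card_powerset powersetT cardsT.
rewrite card_setT -(cardsC multipart).
rewrite (cardsD1 set0 (~: _)) inE set0_notin_multipart card_nonempty_mono.
rewrite (eq_bigr _ (fun i _ => card_fibre_subsets i)) big_split /= sum1_card.
by rewrite -[#|xpredT|]/#|I|; lia.
Qed.

Lemma card_fibres : #|T| = \sum_i #|fibre i|.
Proof.
rewrite -sum1_card (partition_big p predT) //=; apply: eq_bigr => i _.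
by rewrite -sum1_card; apply: eq_bigl => x; rewrite inE.
Qed.

Hypothesis p_surj : forall i, exists x, p x = i.

Lemma fibre_neq0 i : fibre i != set0.
Proof. by have [x px] := p_surj i; apply/set0Pn; exists x; rewrite inE px. Qed.

Lemma fibre_inj : injective fibre.
Proof.
move=> i j eq_ij; have [x px] := p_surj i.
have : x \in fibre i by rewrite inE px.
by rewrite eq_ij inE px => /eqP.
Qed.

Definition extremal_family := multipart :|: (fibre @: setT).

Lemma mutually_neighboring_extremal : mutually_neighboring G extremal_family.
Proof.
apply/mutually_neighboringP => A B AF BF AB.
have F_neq0 C : C \in extremal_family -> C != set0.
  by case/setUP => [/multipart_neq0 // | /imsetP[i _ ->]]; apply: fibre_neq0.
have [AM | AM] := boolP (A \in multipart); first exact/multipart_neighbors/F_neq0.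
have [BM | BM] := boolP (B \in multipart).
  by rewrite neighbors_cmpC; apply/multipart_neighbors/F_neq0.
move: AF BF; rewrite !in_setU (negbTE AM) (negbTE BM) /=.
move=> /imsetP[i _ eA] /imsetP[j _ eB].
have [x px] := p_surj i; have [y py] := p_surj j.
rewrite neighbors_cmpE; apply/existsP; exists x; rewrite eA inE px eqxx /=.
apply/existsP; exists y; rewrite eB inE py eqxx /=.
by apply: contraNneq AB => eij; rewrite eA eB eij.
Qed.

Lemma card_extremal : #|extremal_family| = #|multipart| + #|I|.
Proof.
rewrite cardsU card_imset ?cardsT; last exact: fibre_inj.
suff -> : multipart :&: (fibre @: setT) = set0 by rewrite cards0 subn0.
apply/setP => A; rewrite in_setI in_set0; apply/negbTE/andP => -[AM /imsetP[i _ eA]].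
by move: (fibre_notin_multipart i); rewrite -eA AM.
Qed.

Lemma M_cmp_rel : M G = #|multipart| + #|I|.
Proof.
apply/eqP; rewrite eqn_leq; apply/andP; split.
  by apply/bigmax_leqP => F; apply: card_mutually_neighboring_cmp.
rewrite -card_extremal.
exact: (leq_bigmax_cond (F := fun F : {set {set T}} => #|F|))
  mutually_neighboring_extremal.
Qed.

Lemma M_cmp_relE :
  M G + \sum_i 2 ^ #|fibre i| + 1 = 2 ^ (\sum_i #|fibre i|) + 2 * #|I|.
Proof. by rewrite M_cmp_rel -card_fibres; have := card_multipart; lia. Qed.

End CompleteMultipartite.

Lemma fibres_gt0_surj (T I : finType) (p : T -> I) :
  (forall i, 0 < #|fibre p i|) -> forall i, exists x, p x = i.
Proof.
by move=> fibre_gt0 i; have /card_gt0P[x] := fibre_gt0 i; rewrite inE => /eqP; exists x.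
Qed.

Theorem proposition1 :
  (forall (T : finType) (p : T -> bool) (m n : nat),
      0 < m -> 0 < n ->
      #|[set x | p x]| = m -> #|[set x | ~~ p x]| = n ->
      M (cmp_rel p) = (2 ^ m - 1) * (2 ^ n - 1) + 2)
  /\
  (forall (r : nat) (T : finType) (n : 'I_r -> nat) (p : T -> 'I_r),
      0 < r -> (forall i, 0 < n i) ->
      (forall i, #|[set x | p x == i]| = n i) ->
      ((M (cmp_rel p))%:Z =
         (2 ^ (\sum_(i < r) n i))%:Z - (\sum_(i < r) 2 ^ n i)%:Z
         + (2 * r)%:Z - 1)%R).
Proof.
split=> [T p m n m_gt0 n_gt0 card_true card_false | r T n p r_gt0 n_gt0 card_part].
  have card_fibre b : #|fibre p b| = if b then m else n.
    rewrite -card_true -card_false.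
    by case: b; apply: eq_card => x; rewrite !inE ?eqb_id ?eqbF_neg.
  have p_surj : forall b, exists x, p x = b.
    by apply: fibres_gt0_surj => -[]; rewrite card_fibre.
  have := M_cmp_relE true p_surj; rewrite !big_bool /= !card_fibre card_bool expnD.
  have : 0 < 2 ^ n by rewrite expn_gt0.
  have : 0 < 2 ^ m by rewrite expn_gt0.
  by move: (M _) (2 ^ m) (2 ^ n) => k [|a] [|b] // _ _; rewrite !subn1; nia.
have card_fibre i : #|fibre p i| = n i := card_part i.
have p_surj : forall i, exists x, p x = i.
  by apply: fibres_gt0_surj => i; rewrite card_fibre.
have := M_cmp_relE (Ordinal r_gt0) p_surj; rewrite card_ord.
rewrite (eq_bigr n (fun i _ => card_fibre i)).
rewrite (eq_bigr (fun i => 2 ^ n i) (fun i _ => congr1 (expn 2) (card_fibre i))).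
by move: (M _) (2 ^ _) (\sum_i 2 ^ n i) => k a b; lia.
Qed.
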